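(* The abstraction functor $[\mathbb{A}](-)\colon\mathsf{Nom}\to\mathsf{Nom}$ has a locally monotone extension to $\mathrm{Kl}(\mathcal{P}_{\mathsf{ufs}})$.
   Context: Fix a countably infinite set $\mathbb{A}$ of names; $\mathsf{Nom}$ is the category of nominal sets (sets with an action of the group of finite permutations of $\mathbb{A}$ in which every element $x$ has a finite support; $\mathrm{supp}(x)$ is the least one, and $a$ is fresh for $x$ if $a\notin\mathrm{supp}(x)$) and equivariant maps. For a nominal set $X$, $[\mathbb{A}]X$ is the quotient of $\mathbb{A}\times X$ by the relation $(a,x)\sim(b,y)$ iff $(a\,c)\cdot x=(b\,c)\cdot y$ for some (equivalently all) fresh $c$; the class of $(a,x)$ is written $\langle a\rangle x$, and $[\mathbb{A}]f(\langle a\rangle x)=\langle a\rangle f(x)$. $\mathcal{P}_{\mathsf{ufs}}X$ is the nominal set of uniformly finitely supported subsets $A\subseteq X$ (those with $\bigcup_{x\in A}\mathrm{supp}(x)$ finite); it is a monad with unit $x\mapsto\{x\}$ and multiplication union. $\mathrm{Kl}(\mathcal{P}_{\mathsf{ufs}})$ is its Kleisli category (morphisms $X\to Y$ are equivariant maps $X\to\mathcal{P}_{\mathsf{ufs}}Y$), with $J\colon\mathsf{Nom}\to\mathrm{Kl}(\mathcal{P}_{\mathsf{ufs}})$, $J f=\{-\}\cdot f$. An extension of an endofunctor $F$ is an endofunctor $\overline{F}$ on the Kleisli category with $\overline{F}J=JF$; it is locally monotone if it is monotone on hom-sets ordered pointwise by inclusion. *)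

From Stdlib Require Import FunctionalExtensionality PropExtensionality ProofIrrelevance.
From mathcomp Require Import all_boot.

Set Implicit Arguments.
Unset Strict Implicit.
Unset Printing Implicit Defensive.

(* Names: the countably infinite set A is nat.                              *)

Record fperm := FPerm {
  pfun :> nat -> nat;
  pinvf : nat -> nat;
  pfunK : cancel pfun pinvf;
  pinvfK : cancel pinvf pfun;
  pfin : exists s : seq nat, forall a, a \notin s -> pfun a = a }.

Definition perm_id : fperm :=
  @FPerm id id (fun _ => erefl) (fun _ => erefl)
    (ex_intro _ [::] (fun _ _ => erefl)).

Lemma comp_fin (p q : fperm) :
  exists s : seq nat, forall a, a \notin s -> p (q a) = a.
Proof.
case: (pfin p) => sp Hp; case: (pfin q) => sq Hq.
exists (sp ++ sq) => a; rewrite mem_cat negb_or => /andP[ap aq].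
by rewrite Hq // Hp.
Qed.

Lemma comp_K (p q : fperm) :
  cancel (fun a => p (q a)) (fun a => pinvf q (pinvf p a)).
Proof. by move=> a; rewrite !pfunK. Qed.

Lemma comp_KV (p q : fperm) :
  cancel (fun a => pinvf q (pinvf p a)) (fun a => p (q a)).
Proof. by move=> a; rewrite !pinvfK. Qed.

Definition perm_comp (p q : fperm) : fperm :=
  @FPerm (fun a => p (q a)) (fun a => pinvf q (pinvf p a))
    (comp_K p q) (comp_KV p q) (comp_fin p q).

Lemma inv_fin (p : fperm) :
  exists s : seq nat, forall a, a \notin s -> pinvf p a = a.
Proof.
case: (pfin p) => s Hs; exists s => a /Hs e.
by rewrite -{1}e pfunK.
Qed.

Definition perm_inv (p : fperm) : fperm :=
  @FPerm (pinvf p) p (pinvfK p) (pfunK p) (inv_fin p).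

Definition swapf (a b : nat) (c : nat) : nat :=
  if c == a then b else if c == b then a else c.

Lemma swapfK a b : cancel (swapf a b) (swapf a b).
Proof.
move=> c; rewrite /swapf.
case: (eqVneq c a) => [->|ca].
  by rewrite eqxx; case: (eqVneq b a) => [->|ba]; rewrite ?eqxx.
case: (eqVneq c b) => [->|cb]; first by rewrite eqxx.
by rewrite (negPf ca) (negPf cb).
Qed.

Lemma swap_fin a b :
  exists s : seq nat, forall c, c \notin s -> swapf a b c = c.
Proof.
exists [:: a; b] => c; rewrite !inE negb_or => /andP[ca cb].
by rewrite /swapf (negPf ca) (negPf cb).
Qed.

Definition swap (a b : nat) : fperm :=
  @FPerm (swapf a b) (swapf a b) (swapfK a b) (swapfK a b) (swap_fin a b).

Definition supports (X : Type) (act : fperm -> X -> X) (S : seq nat) (x : X) :=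
  forall p : fperm, (forall a, a \in S -> p a = a) -> act p x = x.

Record nominal := Nominal {
  carrier :> Type;
  act : fperm -> carrier -> carrier;
  act_ext : forall (p q : fperm) x, (forall a, p a = q a) -> act p x = act q x;
  act_id : forall x, act perm_id x = x;
  act_comp : forall p q x, act (perm_comp p q) x = act p (act q x);
  act_fs : forall x, exists S : seq nat, supports act S x }.

Arguments act {n}.

(* a is fresh for x, i.e. a is not in the least support supp(x)
   (equivalently: some finite support of x avoids a) *)
Definition fresh (X : nominal) (a : nat) (x : X) :=
  exists S : seq nat, supports (@act X) S x /\ a \notin S.

Definition equivariant (X Y : nominal) (f : X -> Y) :=
  forall (p : fperm) (x : X), f (act p x) = act p (f x).

Lemma act_invK (X : nominal) (p : fperm) (x : X) :
  act (perm_inv p) (act p x) = x.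
Proof.
rewrite -act_comp -[RHS]act_id; apply: act_ext => a /=; exact: pfunK.
Qed.

Lemma act_Kinv (X : nominal) (p : fperm) (x : X) :
  act p (act (perm_inv p) x) = x.
Proof.
rewrite -act_comp -[RHS]act_id; apply: act_ext => a /=; exact: pinvfK.
Qed.

Lemma supports_act (X : nominal) (p : fperm) S (x : X) :
  supports (@act X) S x -> supports (@act X) (map p S) (act p x).
Proof.
move=> HS q Hq.
have Hr : act (perm_comp (perm_inv p) (perm_comp q p)) x = x.
  apply: HS => a aS /=.
  by rewrite Hq ?pfunK // map_f.
rewrite -{2}Hr -!act_comp; apply: act_ext => a /=.
by rewrite pinvfK.
Qed.

Lemma fresh_act (X : nominal) (p : fperm) c (x : X) :
  fresh c x -> fresh (p c) (act p x).
Proof.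
case=> S [HS cS]; exists (map p S); split; first exact: supports_act.
by rewrite mem_map //; apply: (can_inj (pfunK p)).
Qed.

Definition absrel (X : nominal) (u v : nat * X) : Prop :=
  exists c : nat, [/\ c != u.1, c != v.1, fresh c u.2, fresh c v.2 &
    act (swap u.1 c) u.2 = act (swap v.1 c) v.2].

Lemma swap_conj (X : nominal) (p : fperm) a c (x : X) :
  act p (act (swap a c) x) = act (swap (p a) (p c)) (act p x).
Proof.
rewrite -!act_comp; apply: act_ext => z /=.
rewrite /swapf !(inj_eq (can_inj (pfunK p))).
by case: (z == a); case: (z == c).
Qed.

Lemma absrel_act (X : nominal) (p : fperm) (u v : nat * X) :
  absrel u v -> absrel (p u.1, act p u.2) (p v.1, act p v.2).
Proof.
case: u v => a x [b y] [c /= [ca cb fx fy e]].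
have pinj := can_inj (pfunK p).
exists (p c); split => /=.
- by rewrite (inj_eq pinj).
- by rewrite (inj_eq pinj).
- exact: fresh_act.
- exact: fresh_act.
by rewrite -!swap_conj e.
Qed.

Lemma absrel_actE (X : nominal) (p : fperm) (u v : nat * X) :
  absrel (p u.1, act p u.2) v <->
  absrel u (perm_inv p v.1, act (perm_inv p) v.2).
Proof.
split=> H.
  have := absrel_act (perm_inv p) H.
  by rewrite /= pfunK act_invK; case: u {H}.
have := absrel_act p H.
by rewrite /= pinvfK act_Kinv; case: v {H}.
Qed.

Definition abs_carrier (X : nominal) :=
  {P : nat * X -> Prop | exists a (x : X), forall q, P q <-> absrel (a, x) q}.

Lemma abs_act_class (X : nominal) (p : fperm) (P : abs_carrier X) :
  exists a (x : X), forall q,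
    sval P (perm_inv p q.1, act (perm_inv p) q.2) <-> absrel (a, x) q.
Proof.
case: P => P [a [x HP]] /=; exists (p a), (act p x) => q.
rewrite HP; split => H.
  by apply/(absrel_actE p (a, x) q).
by apply/(absrel_actE p (a, x) q).
Qed.

Definition abs_act (X : nominal) (p : fperm) (P : abs_carrier X) : abs_carrier X :=
  exist _ (fun q => sval P (perm_inv p q.1, act (perm_inv p) q.2))
    (abs_act_class p P).

Lemma abs_eq (X : nominal) (P Q : abs_carrier X) : sval P = sval Q -> P = Q.
Proof.
case: P Q => P HP [Q HQ] /= e; subst Q; f_equal; apply: proof_irrelevance.
Qed.

Lemma inv_ext (p q : fperm) : (forall a, p a = q a) ->
  forall a, pinvf p a = pinvf q a.
Proof.
move=> H a; apply: (can_inj (pfunK p)).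
by rewrite pinvfK H pinvfK.
Qed.

Lemma abs_act_ext (X : nominal) (p q : fperm) (P : abs_carrier X) :
  (forall a, p a = q a) -> abs_act p P = abs_act q P.
Proof.
move=> H; apply: abs_eq; apply: functional_extensionality => -[b y] /=.
have Hi := inv_ext H.
by rewrite Hi (@act_ext X (perm_inv p) (perm_inv q)).
Qed.

Lemma abs_act_id (X : nominal) (P : abs_carrier X) : abs_act perm_id P = P.
Proof.
apply: abs_eq; apply: functional_extensionality => -[b y] /=.
by rewrite (@act_ext X (perm_inv perm_id) perm_id) // act_id.
Qed.

Lemma abs_act_comp (X : nominal) (p q : fperm) (P : abs_carrier X) :
  abs_act (perm_comp p q) P = abs_act p (abs_act q P).
Proof.
apply: abs_eq; apply: functional_extensionality => -[b y] /=.
rewrite -act_comp.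
by rewrite (@act_ext X (perm_inv (perm_comp p q))
                       (perm_comp (perm_inv q) (perm_inv p))).
Qed.

Lemma abs_act_fs (X : nominal) (P : abs_carrier X) :
  exists S : seq nat, supports (@abs_act X) S P.
Proof.
case: P => P [a [x HP]].
case: (act_fs x) => S HS; exists (a :: S) => p Hp.
apply: abs_eq; apply: functional_extensionality => -[b y] /=.
apply: propositional_extensionality.
rewrite HP -(absrel_actE p (a, x) (b, y)) /=.
rewrite Hp ?mem_head // HS; last by move=> c cS; apply: Hp; rewrite inE cS orbT.
by rewrite HP.
Qed.

Definition Abs (X : nominal) : nominal :=
  @Nominal (abs_carrier X) (@abs_act X) (@abs_act_ext X) (@abs_act_id X)
    (@abs_act_comp X) (@abs_act_fs X).

Definition abs (X : nominal) (a : nat) (x : X) : Abs X :=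
  exist _ (absrel (a, x)) (ex_intro _ a (ex_intro _ x (fun q => iff_refl _))).

(* A map X -> P_ufs Y is represented by the relation f x y := (y \in f x).
   klmor f: f is an equivariant map X -> P_ufs Y, i.e.
   - each f x is uniformly finitely supported (the union of the supports of
     its elements is contained in a finite set S), and
   - f (p.x) = p.(f x) for the pointwise action on subsets. *)
Definition klmor (X Y : nominal) (f : X -> Y -> Prop) : Prop :=
  (forall x : X, exists S : seq nat, forall y, f x y -> supports (@act Y) S y) /\
  (forall (p : fperm) (x : X) (y : Y), f (act p x) y <-> f x (act (perm_inv p) y)).

Definition kl_id (X : nominal) : X -> X -> Prop := fun x y => y = x.

Definition kl_comp (X Y Z : nominal) (f : X -> Y -> Prop) (g : Y -> Z -> Prop)
  : X -> Z -> Prop := fun x z => exists y, f x y /\ g y z.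

Definition klJ (X Y : nominal) (f : X -> Y) : X -> Y -> Prop :=
  fun x y => y = f x.

Definition klJAbs (X Y : nominal) (f : X -> Y) : Abs X -> Abs Y -> Prop :=
  fun P Q => exists (a : nat) (x : X), P = abs a x /\ Q = abs a (f x).

(* The extension sends f : X -> P_ufs Y to <a>x |-> { <a>y | y in f x }.  The
   only real issue is that this is well defined, i.e. independent of the
   representative (a, x).  Equivariance and uniform finite support of f imply
   that every name fresh for x is fresh for every y in f x, so a renaming
   (a c).x = (b c).x' with c fresh transports y in f x to (b c)(a c).y in f x'
   and <a>y = <b>((b c)(a c).y). *)
From Stdlib Require Import FunctionalExtensionality PropExtensionality.
From mathcomp Require Import all_boot.

Set Implicit Arguments.
Unset Strict Implicit.
Unset Printing Implicit Defensive.

Lemma exists_notin (s : seq nat) : exists c, c \notin s.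
Proof.
exists (\max_(i <- s) i).+1; apply/negP => s_max.
by have := @leq_bigmax_seq _ s xpredT id _ s_max isT; rewrite ltnn.
Qed.

Ltac swap_cases :=
  rewrite /swapf;
  repeat match goal with
  | H : is_true (?x != ?x) |- _ => by rewrite eqxx in H
  | |- context[?x == ?x] => rewrite eqxx
  | |- context[?x == ?y] =>
      is_var x; is_var y;
      let xy := fresh in
      destruct (eqVneq x y) as [xy|xy];
      [subst x | rewrite ?(eq_sym y x) ?(negbTE xy)]
  end; try done.

Section Swaps.
Variable X : nominal.
Implicit Types x : X.

Lemma act_swapK a b x : act (swap a b) (act (swap a b) x) = x.
Proof. by rewrite -act_comp -[RHS]act_id; apply: act_ext => z /=; exact: swapfK. Qed.

Lemma act_swapxx a x : act (swap a a) x = x.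
Proof. by rewrite -[RHS]act_id; apply: act_ext => z /=; rewrite /swapf; case: eqP. Qed.

Lemma supports_swap S c d x : supports (@act X) S x ->
  c \notin S -> d \notin S -> act (swap c d) x = x.
Proof.
move=> HS cS dS; apply: HS => a aS /=; rewrite /swapf.
by rewrite (negPf (memPn cS a aS)) (negPf (memPn dS a aS)).
Qed.

(* Two names fresh for x may have unrelated supports witnessing it; a third
   name d fresh for both lets one write (c e) = (c d)(e d)(c d). *)
Lemma fresh_swap c e x : fresh c x -> fresh e x -> act (swap c e) x = x.
Proof.
case=> S1 [HS1 cS1] [S2 [HS2 eS2]].
have [<-|ce] := eqVneq c e; first exact: act_swapxx.
have [d] := exists_notin (S1 ++ S2 ++ [:: c; e]).
rewrite !mem_cat !inE !negb_or => /and3P[dS1 dS2 /andP[dc de]].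
rewrite -{2}(supports_swap HS1 cS1 dS1) -{2}(supports_swap HS2 eS2 dS2).
rewrite -{2}(supports_swap HS1 cS1 dS1) -!act_comp.
by apply: act_ext => z /=; swap_cases.
Qed.

Lemma exists_fresh x (s : seq nat) : exists c, c \notin s /\ fresh c x.
Proof.
have [S HS] := act_fs x; have [c] := exists_notin (s ++ S).
by rewrite mem_cat negb_or => /andP[cs cS]; exists c; split => //; exists S.
Qed.

End Swaps.

Section Abstraction.
Variable X : nominal.
Implicit Types x y : X.

(* Conjugating by (c e), which fixes x and y, turns the witness c into e. *)
Lemma absrel_fresh a b e x y : absrel (a, x) (b, y) ->
  e != a -> e != b -> fresh e x -> fresh e y ->
  act (swap a e) x = act (swap b e) y.
Proof.
case=> c /= [ca cb fcx fcy Exy] ea eb fex fey.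
have [->//|ec] := eqVneq e c.
have conj_swap w d : d != c -> d != e ->
    act (swap d e) (act (swap c e) w) = act (swap c e) (act (swap d c) w).
  by move=> dc de; rewrite -!act_comp; apply: act_ext => z /=; move: ec; swap_cases.
rewrite -(fresh_swap fcx fex) -[in RHS](fresh_swap fcy fey).
by rewrite conj_swap ?Exy -?conj_swap // eq_sym.
Qed.

Lemma absrel_refl a x : absrel (a, x) (a, x).
Proof.
have [c []] := exists_fresh x [:: a]; rewrite inE => ca fc.
by exists c; split.
Qed.

Lemma absrel_sym (u v : nat * X) : absrel u v -> absrel v u.
Proof. by case=> c [? ? ? ? ?]; exists c; split. Qed.

Lemma absrel_trans (u v w : nat * X) : absrel u v -> absrel v w -> absrel u w.
Proof.
case: u v w => a x [b y] [d z] Hxy Hyz.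
have [Sx Hx] := act_fs x; have [Sy Hy] := act_fs y; have [Sz Hz] := act_fs z.
have [e] := exists_notin (Sx ++ Sy ++ Sz ++ [:: a; b; d]).
rewrite !mem_cat !inE !negb_or => /and4P[eSx eSy eSz /and3P[ea eb ed]].
have fx : fresh e x by exists Sx.
have fy : fresh e y by exists Sy.
have fz : fresh e z by exists Sz.
by exists e; split => //=; rewrite (absrel_fresh Hxy) // (absrel_fresh Hyz).
Qed.

Lemma abs_eqP a b x y : absrel (a, x) (b, y) <-> abs a x = abs b y.
Proof.
split=> [Hxy|Exy].
  apply: abs_eq; apply: functional_extensionality => q /=.
  apply: propositional_extensionality; split.
    exact: absrel_trans (absrel_sym Hxy).
  exact: absrel_trans Hxy.
have /= -> := f_equal (fun P : Abs X => sval P (b, y)) Exy.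
exact: absrel_refl.
Qed.

Lemma abs_surj (u : Abs X) : exists a x, u = abs a x.
Proof.
case: u => P [a [x HP]]; exists a, x; apply: abs_eq => /=.
by apply: functional_extensionality => q; apply: propositional_extensionality.
Qed.

Lemma act_abs p a x : act p (abs a x) = abs (p a) (act p x).
Proof.
apply: abs_eq; apply: functional_extensionality => q /=.
by apply: propositional_extensionality; rewrite (absrel_actE p (a, x) q).
Qed.

Lemma supports_abs S a x : supports (@act X) S x ->
  supports (@act (Abs X)) (a :: S) (abs a x).
Proof.
move=> HS p Hp; rewrite act_abs Hp ?mem_head // HS // => c cS.
by apply: Hp; rewrite inE cS orbT.
Qed.

End Abstraction.

Definition rel_equivariant (X Y : nominal) (R : X -> Y -> Prop) :=
  forall (p : fperm) x y, R x y -> R (act p x) (act p y).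

Lemma rel_equivariantE (X Y : nominal) (R : X -> Y -> Prop) p x y :
  rel_equivariant R -> R (act p x) y <-> R x (act (perm_inv p) y).
Proof.
move=> eqR; split=> [/(eqR (perm_inv p))|/(eqR p)].
  by rewrite act_invK.
by rewrite act_Kinv.
Qed.

Definition kl_abs (X Y : nominal) (f : X -> Y -> Prop) (u : Abs X) (v : Abs Y) :=
  exists a x y, [/\ u = abs a x, v = abs a y & f x y].

Section KleisliMorphisms.
Variables (X Y : nominal) (f : X -> Y -> Prop).
Hypothesis kf : klmor f.

Lemma klmor_equivariant : rel_equivariant f.
Proof. by case: kf => _ Hf p x y fxy; apply/Hf; rewrite act_invK. Qed.

(* The uniform support U of f x is not assumed to avoid c; swapping c with a
   name b outside U and a support of x moves U onto a support avoiding c. *)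
Lemma klmor_fresh c x y : f x y -> fresh c x -> fresh c y.
Proof.
move=> fxy [S [HS cS]]; have [/(_ x) [U HU] _] := kf.
have [cU|cU] := boolP (c \in U); last by exists U; split => //; exact: HU.
have [b] := exists_notin (U ++ S).
rewrite mem_cat negb_or => /andP[bU bS].
have := klmor_equivariant (swap c b) fxy.
rewrite (supports_swap HS cS bS) => /HU supp_swapy.
exists (map (swap c b) U); split.
  by rewrite -[y](act_swapK c b); exact: supports_act supp_swapy.
apply/mapP => -[u uU] /= cu.
have : swapf c b c = swapf c b (swapf c b u) by rewrite -cu.
by rewrite swapfK /swapf eqxx => bu; move: bU; rewrite bu uU.
Qed.

Lemma klmor_abs_transport a b x x' y : f x y -> abs a x = abs b x' ->
  exists y', f x' y' /\ abs a y = abs b y'.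
Proof.
move=> fxy /abs_eqP [c /= [ca cb fcx fcx' Exx']].
have fx'y' : f x' (act (swap b c) (act (swap a c) y)).
  by rewrite -[x'](act_swapK b c) -Exx'; do 2 apply: klmor_equivariant.
eexists; split; first exact: fx'y'.
apply/abs_eqP; exists c; split => //=.
- exact: klmor_fresh fxy fcx.
- exact: klmor_fresh fx'y' fcx'.
by rewrite act_swapK.
Qed.

Lemma kl_abs_absE a x v :
  kl_abs f (abs a x) v <-> exists2 y, f x y & v = abs a y.
Proof.
split=> [[a' [x' [y' [Ex -> fxy]]]]|[y fxy ->]]; last by exists a, x, y.
have [y [fy Ey]] := klmor_abs_transport fxy (esym Ex).
by exists y.
Qed.

Lemma kl_abs_equivariant : rel_equivariant (kl_abs f).
Proof.
move=> p u v [a [x [y [-> -> fxy]]]].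
exists (p a), (act p x), (act p y); rewrite !act_abs.
by split; last exact: klmor_equivariant.
Qed.

Lemma klmor_kl_abs : klmor (kl_abs f).
Proof.
split=> [u|p u v]; last exact/rel_equivariantE/kl_abs_equivariant.
have [a [x ->]] := abs_surj u; have [/(_ x) [U HU] _] := kf.
by exists (a :: U) => v /kl_abs_absE [y /HU suppy ->]; exact: supports_abs.
Qed.

End KleisliMorphisms.

Section KleisliAbstraction.
Variables X Y Z : nominal.

Lemma kl_abs_mono (f g : X -> Y -> Prop) : (forall x y, f x y -> g x y) ->
  forall u v, kl_abs f u v -> kl_abs g u v.
Proof. by move=> fg u v [a [x [y [-> -> /fg gxy]]]]; exists a, x, y. Qed.

Lemma kl_abs_id (u v : Abs X) : kl_abs (@kl_id X) u v <-> kl_id u v.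
Proof.
split=> [[a [x [y [-> -> ->]]]] //|->].
by have [a [x ->]] := abs_surj u; exists a, x, x.
Qed.

Lemma kl_abs_comp (f : X -> Y -> Prop) (g : Y -> Z -> Prop) : klmor g ->
  forall u w, kl_abs (kl_comp f g) u w <-> kl_comp (kl_abs f) (kl_abs g) u w.
Proof.
move=> kg u w; split=> [[a [x [z [-> -> [y [fxy gyz]]]]]]|].
  by exists (abs a y); split; [exists a, x, y | exists a, y, z].
case=> v [[a [x [y [-> -> fxy]]]] /(kl_abs_absE kg) [z gyz ->]].
by exists a, x, z; split => //; exists y.
Qed.

Lemma kl_abs_J (f : X -> Y) u v : kl_abs (klJ f) u v <-> klJAbs f u v.
Proof.
split=> [[a [x [y [-> -> ->]]]]|[a [x [-> ->]]]]; first by exists a, x.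
by exists a, x, (f x).
Qed.

End KleisliAbstraction.

Theorem proposition3p11 :
  exists ext : forall X Y : nominal,
      (X -> Y -> Prop) -> (Abs X -> Abs Y -> Prop),
    ((* ext sends Kleisli morphisms X -> Y to Kleisli morphisms [A]X -> [A]Y *)
        (forall (X Y : nominal) (f : X -> Y -> Prop),
            klmor f -> klmor (ext X Y f)) /\
        (* ext is well defined on morphisms (which are equal iff extensionally equal) *)
        (forall (X Y : nominal) (f g : X -> Y -> Prop), klmor f -> klmor g ->
            (forall x y, f x y <-> g x y) ->
            forall u v, ext X Y f u v <-> ext X Y g u v) /\
        (* functoriality: identities *)
        (forall (X : nominal) (u v : Abs X),
            ext X X (@kl_id X) u v <-> @kl_id (Abs X) u v) /\
        (* functoriality: composition *)
        (forall (X Y Z : nominal) (f : X -> Y -> Prop) (g : Y -> Z -> Prop),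
            klmor f -> klmor g ->
            forall u w, ext X Z (kl_comp f g) u w <->
                        kl_comp (ext X Y f) (ext Y Z g) u w) /\
        (* extension: Fbar (J f) = J ([A] f) *)
        (forall (X Y : nominal) (f : X -> Y), equivariant f ->
            forall u v, ext X Y (klJ f) u v <-> klJAbs f u v) /\
      (* local monotonicity *)
        (forall (X Y : nominal) (f g : X -> Y -> Prop), klmor f -> klmor g ->
            (forall x y, f x y -> g x y) ->
            forall u v, ext X Y f u v -> ext X Y g u v)).
Proof.
exists kl_abs; split; [|split; [|split; [|split; [|split]]]].
- by move=> X Y f; exact: klmor_kl_abs.
- move=> X Y f g _ _ fg u v.
  by split; apply: kl_abs_mono => x y /fg.
- exact: kl_abs_id.
- by move=> X Y Z f g _; exact: kl_abs_comp.
- by move=> X Y f _; exact: kl_abs_J.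
- by move=> X Y f g _ _; exact: kl_abs_mono.
Qed.
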